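(* In the right-angled Artin group $A(P_3)=\langle a,b,c\mid ab=ba,\ bc=cb\rangle$ we have \[\langle ab,c\rangle\cap\langle a,bc\rangle\cap\langle a,c\rangle=[\langle a,c\rangle,\langle a,c\rangle].\]
   Context: $[\langle a,c\rangle,\langle a,c\rangle]$ denotes the commutator (derived) subgroup of the subgroup $\langle a,c\rangle$. *)

(* The right-angled Artin group A(P_3) = < a,b,c | ab=ba, bc=cb >
   is modelled literally by its presentation: elements are words in the
   letters a^{+-1}, b^{+-1}, c^{+-1}, and two words represent the same group
   element iff they are related by the smallest equivalence relation that is
   closed under inserting/deleting x x^{-1} (free reduction) and applying the
   defining relators ab = ba, bc = cb inside a word. *)
From Stdlib Require Import List Relation_Operators.
Import ListNotations.

Inductive gen : Type := Ga | Gb | Gc.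

(* a letter is a generator together with a flag: true = inverse *)
Definition letter : Type := (gen * bool)%type.
Definition word : Type := list letter.

Definition flip (x : letter) : letter := (fst x, negb (snd x)).

Inductive step : word -> word -> Prop :=
  | step_cancel (u v : word) (x : letter) :
      step (u ++ [x; flip x] ++ v) (u ++ v)
  | step_ab (u v : word) :
      step (u ++ [(Ga, false); (Gb, false)] ++ v) (u ++ [(Gb, false); (Ga, false)] ++ v)
  | step_bc (u v : word) :
      step (u ++ [(Gb, false); (Gc, false)] ++ v) (u ++ [(Gc, false); (Gb, false)] ++ v).

Definition weq : word -> word -> Prop := clos_refl_sym_trans word step.

Definition wmul (u v : word) : word := u ++ v.
Definition winv (u : word) : word := rev (map flip u).
Definition wcomm (g h : word) : word := winv g ++ winv h ++ g ++ h.

Definition wa : word := [(Ga, false)].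
Definition wb : word := [(Gb, false)].
Definition wc : word := [(Gc, false)].

Definition gensub (S : word -> Prop) (w : word) : Prop :=
  exists l : list (word * bool),
    Forall (fun p : word * bool => S (fst p)) l /\
    weq w (concat (map (fun p : word * bool => if snd p then winv (fst p) else fst p) l)).

Definition gensubl (gs : list word) : word -> Prop :=
  gensub (fun s => exists g, In g gs /\ weq s g).

Definition derived (H : word -> Prop) : word -> Prop :=
  gensub (fun s => exists g h, H g /\ H h /\ weq s (wcomm g h)).

(* The maps w |-> e_b(w) - e_a(w), w |-> e_b(w) - e_c(w) and w |-> e_b(w), where e_x counts
   the signed occurrences of x, are homomorphisms to Z vanishing on <ab,c>, <a,bc> and
   <a,c> respectively.  An element of the intersection is therefore a word in a and c
   with all exponent sums zero, and such a word lies in the derived subgroup of <a,c>.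
   Conversely b is central and a = (ab) b^-1, c = b^-1 (bc), so <a,c> lies in both
   <ab,c> and <a,bc> modulo the centre; commutators do not see central factors. *)

From Stdlib Require Import List Relation_Operators ZArith Lia Setoid Morphisms.
Import ListNotations.

Local Open Scope Z_scope.

#[export] Instance weq_Equivalence : Equivalence weq.
Proof. split; red; [apply rst_refl | apply rst_sym | apply rst_trans]. Qed.

Lemma eq_weq u v : u = v -> weq u v.
Proof. now intros ->. Qed.

Ltac reassoc t :=
  transitivity t;
  [apply eq_weq; simpl; repeat (rewrite <- app_assoc; simpl); rewrite ?app_nil_r;
   reflexivity |].

Lemma app_context {A} (x u l v y : list A) :
  x ++ (u ++ l ++ v) ++ y = (x ++ u) ++ l ++ (v ++ y).
Proof. now rewrite !app_assoc. Qed.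

Lemma step_context x y u v : step u v -> step (x ++ u ++ y) (x ++ v ++ y).
Proof.
  destruct 1 as [u v z | u v | u v]; rewrite !app_context; try constructor.
  change (u ++ v) with (u ++ [] ++ v); rewrite app_context; constructor.
Qed.

Lemma weq_context x y u v : weq u v -> weq (x ++ u ++ y) (x ++ v ++ y).
Proof.
  induction 1.
  - now apply rst_step, step_context.
  - reflexivity.
  - now symmetry.
  - etransitivity; eassumption.
Qed.

#[export] Instance app_weq : Proper (weq ==> weq ==> weq) (@app letter).
Proof.
  intros u u' Hu v v' Hv; transitivity (u' ++ v).
  - exact (weq_context [] v u u' Hu).
  - pose proof (weq_context u' [] v v' Hv) as Huv; now rewrite !app_nil_r in Huv.
Qed.

Lemma flip_involutive x : flip (flip x) = x.
Proof. destruct x as [g []]; reflexivity. Qed.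

Lemma winv_app u v : winv (u ++ v) = winv v ++ winv u.
Proof. unfold winv; now rewrite map_app, rev_app_distr. Qed.

Lemma winv_involutive u : winv (winv u) = u.
Proof.
  unfold winv. rewrite map_rev, rev_involutive, map_map.
  induction u; simpl; f_equal; auto using flip_involutive.
Qed.

Lemma weq_app_winv u : weq (u ++ winv u) [].
Proof.
  induction u as [|x u IH]; [reflexivity|].
  reassoc ([x] ++ (u ++ winv u) ++ [flip x]); rewrite IH.
  exact (rst_step _ _ _ _ (step_cancel [] [] x)).
Qed.

Lemma weq_winv_app u : weq (winv u ++ u) [].
Proof. rewrite <- (winv_involutive u) at 2; apply weq_app_winv. Qed.

Definition commute (u v : word) : Prop := weq (u ++ v) (v ++ u).

Definition central (z : word) : Prop := forall w, weq (z ++ w) (w ++ z).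

Lemma commute_sym u v : commute u v -> commute v u.
Proof. unfold commute; now symmetry. Qed.

Lemma commute_winv_r u v : commute u v -> commute u (winv v).
Proof.
  unfold commute; intros Huv.
  symmetry; transitivity (winv v ++ u ++ (v ++ winv v)).
  { now rewrite weq_app_winv, app_nil_r. }
  reassoc (winv v ++ (u ++ v) ++ winv v); rewrite Huv.
  reassoc ((winv v ++ v) ++ u ++ winv v); now rewrite weq_winv_app.
Qed.

Lemma commute_app_r u v w : commute u v -> commute u w -> commute u (v ++ w).
Proof.
  unfold commute; intros Hv Hw.
  reassoc ((u ++ v) ++ w); rewrite Hv.
  reassoc (v ++ (u ++ w)); rewrite Hw.
  now rewrite app_assoc.
Qed.

Lemma central_of_letters z : (forall x, commute z [x]) -> central z.
Proof.
  intros Hz w; induction w as [|x w IH].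
  - now rewrite app_nil_r.
  - exact (commute_app_r z [x] w (Hz x) IH).
Qed.

Lemma central_nil : central [].
Proof. apply central_of_letters; intros x; red; reflexivity. Qed.

Lemma central_winv z : central z -> central (winv z).
Proof. intros Hz w; apply commute_sym, commute_winv_r, commute_sym, Hz. Qed.

Lemma commute_ab : commute wa wb.
Proof. exact (rst_step _ _ _ _ (step_ab [] [])). Qed.

Lemma commute_bc : commute wb wc.
Proof. exact (rst_step _ _ _ _ (step_bc [] [])). Qed.

Lemma central_b : central wb.
Proof.
  apply central_of_letters; intros [[] []].
  - exact (commute_winv_r _ wa (commute_sym _ _ commute_ab)).
  - exact (commute_sym _ _ commute_ab).
  - exact (commute_winv_r wb wb ltac:(red; reflexivity)).
  - red; reflexivity.
  - exact (commute_winv_r _ wc commute_bc).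
  - exact commute_bc.
Qed.

Lemma step_winv u v : step u v -> weq (winv u) (winv v).
Proof.
  destruct 1 as [u v x | u v | u v]; rewrite !winv_app;
    do 2 try (apply app_weq; try reflexivity).
  - now rewrite (weq_winv_app [flip x] : weq (winv [x; flip x]) []), app_nil_r.
  - exact (commute_winv_r _ wa (commute_sym _ _ (commute_winv_r _ wb commute_ab))).
  - exact (commute_winv_r _ wb (commute_sym _ _ (commute_winv_r _ wc commute_bc))).
Qed.

#[export] Instance winv_weq : Proper (weq ==> weq) winv.
Proof.
  induction 1.
  - now apply step_winv.
  - reflexivity.
  - now symmetry.
  - etransitivity; eassumption.
Qed.

#[export] Instance wcomm_weq : Proper (weq ==> weq ==> weq) wcomm.
Proof. intros g g' Hg h h' Hh; unfold wcomm; now rewrite Hg, Hh. Qed.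

Lemma weq_swap_wcomm y z : weq (y ++ z) (z ++ y ++ wcomm y z).
Proof.
  symmetry; unfold wcomm.
  reassoc (z ++ (y ++ winv y) ++ winv z ++ y ++ z); rewrite weq_app_winv.
  reassoc ((z ++ winv z) ++ y ++ z); now rewrite weq_app_winv.
Qed.

Lemma gensub_ind (S P : word -> Prop) :
  (forall u v, weq u v -> P v -> P u) -> P [] ->
  (forall u v, P u -> P v -> P (u ++ v)) -> (forall u, P u -> P (winv u)) ->
  (forall s, S s -> P s) -> forall w, gensub S w -> P w.
Proof.
  intros Hweq Hnil Happ Hinv Hgen w [l [Hl Hw]]. apply (Hweq _ _ Hw); clear w Hw.
  induction l as [|[s []] l IH]; simpl; auto; inversion Hl; subst; auto.
Qed.

Lemma gensub_weq {S : word -> Prop} u v : weq u v -> gensub S v -> gensub S u.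
Proof. intros Huv [l [Hl Hv]]; exists l; split; [exact Hl | now rewrite Huv]. Qed.

Lemma gensub_nil {S : word -> Prop} : gensub S [].
Proof. exists []; split; [constructor | reflexivity]. Qed.

Lemma gensub_app {S : word -> Prop} u v : gensub S u -> gensub S v -> gensub S (u ++ v).
Proof.
  intros [l1 [H1 W1]] [l2 [H2 W2]]; exists (l1 ++ l2); split.
  - now apply Forall_app.
  - now rewrite map_app, concat_app, W1, W2.
Qed.

Lemma gensub_gen {S : word -> Prop} s : S s -> gensub S s.
Proof.
  intros Hs; exists [(s, false)]; split; [now constructor | now simpl; rewrite app_nil_r].
Qed.

Lemma gensub_winv {S : word -> Prop} u : gensub S u -> gensub S (winv u).
Proof.
  intros Hu; enough (gensub S u /\ gensub S (winv u)) by tauto; revert u Hu.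
  apply gensub_ind.
  - intros u v Huv [Hv Hv'];
      split; [exact (gensub_weq _ _ Huv Hv) | exact (gensub_weq _ _ (winv_weq _ _ Huv) Hv')].
  - split; apply gensub_nil.
  - intros u v [Hu Hu'] [Hv Hv']; rewrite winv_app; split; now apply gensub_app.
  - intros u [Hu Hu']; now rewrite winv_involutive.
  - intros s Hs; split; [now apply gensub_gen|].
    exists [(s, true)]; split; [now constructor | now simpl; rewrite app_nil_r].
Qed.

Lemma gensub_wcomm {S : word -> Prop} g h : gensub S g -> gensub S h -> gensub S (wcomm g h).
Proof.
  intros Hg Hh; unfold wcomm; repeat apply gensub_app; try apply gensub_winv; assumption.
Qed.

Lemma derived_gensub {S : word -> Prop} w : derived (gensub S) w -> gensub S w.
Proof.
  apply gensub_ind;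
    [exact gensub_weq | exact gensub_nil | exact gensub_app | exact gensub_winv |].
  intros s (g & h & Hg & Hh & Hs); apply (gensub_weq _ _ Hs); now apply gensub_wcomm.
Qed.

Lemma derived_conj {S : word -> Prop} m k :
  gensub S m -> derived (gensub S) k -> derived (gensub S) (winv m ++ k ++ m).
Proof.
  intros Hm Hk.
  apply (gensub_weq _ (wcomm m (winv k) ++ k)).
  - symmetry; unfold wcomm; rewrite winv_involutive.
    reassoc ((winv m ++ k ++ m) ++ (winv k ++ k)); now rewrite weq_winv_app, app_nil_r.
  - apply gensub_app; [apply gensub_gen | exact Hk].
    exists m, (winv k); repeat split; [exact Hm | | reflexivity].
    now apply gensub_winv, derived_gensub.
Qed.

Definition word_hom (F : word -> Z) : Prop :=
  (forall u v, weq u v -> F u = F v) /\ (forall u v, F (u ++ v) = F u + F v).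

Lemma word_hom_sub F G : word_hom F -> word_hom G -> word_hom (fun w => F w - G w).
Proof.
  intros [HF HF'] [HG HG']; split.
  - intros u v Huv; now rewrite (HF _ _ Huv), (HG _ _ Huv).
  - intros u v; rewrite HF', HG'; lia.
Qed.

Lemma gensubl_hom_kernel F gs :
  word_hom F -> Forall (fun g => F g = 0) gs -> forall w, gensubl gs w -> F w = 0.
Proof.
  intros [Hweq Happ] Hgs.
  assert (Hnil : F [] = 0) by (specialize (Happ [] []); simpl in Happ; lia).
  apply gensub_ind; auto.
  - intros u v Huv; now rewrite (Hweq _ _ Huv).
  - intros u v Hu Hv; rewrite Happ; lia.
  - intros u Hu; pose proof (Hweq _ _ (weq_winv_app u)) as Hinv; rewrite Happ in Hinv; lia.
  - intros s (g & Hg & Hs); rewrite (Hweq _ _ Hs); now apply (proj1 (Forall_forall _ _) Hgs).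
Qed.

Lemma gen_eq_dec (g h : gen) : {g = h} + {g <> h}.
Proof. decide equality. Defined.

Definition letter_exponent (g : gen) (x : letter) : Z :=
  if gen_eq_dec (fst x) g then (if snd x then -1 else 1) else 0.

Fixpoint exponent (g : gen) (w : word) : Z :=
  match w with
  | [] => 0
  | x :: w => letter_exponent g x + exponent g w
  end.

Lemma exponent_app g u v : exponent g (u ++ v) = exponent g u + exponent g v.
Proof. induction u; simpl; lia. Qed.

Lemma letter_exponent_flip g x : letter_exponent g (flip x) = - letter_exponent g x.
Proof. destruct x as [h []]; unfold letter_exponent; simpl; destruct gen_eq_dec; lia. Qed.

Lemma exponent_step g u v : step u v -> exponent g u = exponent g v.
Proof.
  destruct 1; rewrite !exponent_app; simpl; [rewrite letter_exponent_flip |..];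
    destruct g; unfold letter_exponent; simpl; lia.
Qed.

Lemma exponent_hom g : word_hom (exponent g).
Proof.
  split; [|apply exponent_app].
  induction 1; [now apply exponent_step | reflexivity | congruence | congruence].
Qed.

Lemma in_of_exponent x v :
  0 < letter_exponent (fst x) x * exponent (fst x) v -> In x v.
Proof.
  induction v as [|y v IH]; simpl; [lia|]; intros Hpos.
  destruct x as [g s], y as [h t]; unfold letter_exponent in *; simpl in *.
  destruct (gen_eq_dec g g) as [_|]; [|congruence].
  destruct (gen_eq_dec h g) as [->|]; [destruct s, t; try (left; reflexivity) |];
    right; apply IH; lia.
Qed.

Lemma gensub_of_letters {S : word -> Prop} u :
  Forall (fun x => gensub S [x]) u -> gensub S u.
Proof.
  induction 1 as [|x u Hx _ IH]; [exact gensub_nil|].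
  exact (gensub_app [x] u Hx IH).
Qed.

Lemma in_flip_of_exponent_cons x v : exponent (fst x) (x :: v) = 0 -> In (flip x) v.
Proof.
  intros Hx; apply in_of_exponent; simpl in *; rewrite letter_exponent_flip.
  destruct x as [g []]; unfold letter_exponent in *; simpl in *;
    destruct gen_eq_dec; [lia | congruence | lia | congruence].
Qed.

(* Induction on length: x v1 x^-1 v2 = (v1 v2) * v2^-1 [v1, x^-1] v2, and v1 v2 is shorter
   with the same exponent sums. *)
Lemma zero_exponent_derived {S : word -> Prop} u :
  Forall (fun x => gensub S [x]) u -> (forall g, exponent g u = 0) ->
  derived (gensub S) u.
Proof.
  induction u as [[|x v] IH] using (induction_ltof1 _ (@length letter));
    intros Hletters Hexp; [exact gensub_nil|].
  destruct (in_split _ _ (in_flip_of_exponent_cons x v (Hexp (fst x)))) as (v1 & v2 & ->).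
  apply Forall_cons_iff in Hletters as [_ Hletters].
  apply Forall_app in Hletters as [Hv1 [Hx' Hv2]%Forall_cons_iff].
  apply (gensub_weq _ ((v1 ++ v2) ++ winv v2 ++ wcomm v1 [flip x] ++ v2)).
  - reassoc ([x] ++ (v1 ++ [flip x]) ++ v2); rewrite (weq_swap_wcomm v1 [flip x]).
    reassoc (([x] ++ winv [x]) ++ v1 ++ wcomm v1 [flip x] ++ v2); rewrite weq_app_winv.
    transitivity (v1 ++ (v2 ++ winv v2) ++ wcomm v1 [flip x] ++ v2).
    + now rewrite weq_app_winv.
    + apply eq_weq; now rewrite <- !app_assoc.
  - apply gensub_app.
    + apply IH; [unfold ltof; simpl; rewrite !length_app; simpl; lia | now apply Forall_app |].
      intros g; specialize (Hexp g); simpl in Hexp.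
      rewrite !exponent_app in *; simpl in Hexp; rewrite letter_exponent_flip in Hexp; lia.
    + apply derived_conj; [now apply gensub_of_letters|].
      apply gensub_gen; exists v1, [flip x]; repeat split; [| exact Hx' | reflexivity].
      now apply gensub_of_letters.
Qed.

Lemma gensubl_gen gs g : In g gs -> gensubl gs g.
Proof. intros Hg; apply gensub_gen; now exists g. Qed.

Lemma gensubl_letter_word gs :
  Forall (Forall (fun x => gensubl gs [x])) gs ->
  forall w, gensubl gs w -> exists u, Forall (fun x => gensubl gs [x]) u /\ weq w u.
Proof.
  intros Hgs; apply gensub_ind.
  - intros u v Huv (w & Hw & Hv); exists w; split; [exact Hw | now rewrite Huv].
  - exists []; split; [constructor | reflexivity].
  - intros u v (u' & Hu' & Hu) (v' & Hv' & Hv); exists (u' ++ v'); split.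
    + now apply Forall_app.
    + now rewrite Hu, Hv.
  - intros u (u' & Hu' & Hu); exists (winv u'); split; [|now rewrite Hu].
    apply Forall_rev, Forall_map, (Forall_impl _ (fun x => gensub_winv [x]) Hu').
  - intros s (g & Hg & Hs); exists g; split; [|exact Hs].
    exact (proj1 (Forall_forall _ _) Hgs g Hg).
Qed.

Definition in_mod_center (K : word -> Prop) (g : word) : Prop :=
  exists k z, K k /\ central z /\ weq g (k ++ z).

Lemma in_mod_center_gensubl gs z g h :
  central z -> In h gs -> weq (z ++ g) h -> in_mod_center (gensubl gs) g.
Proof.
  intros Hz Hh Hzg; exists h, (winv z); repeat split.
  - now apply gensubl_gen.
  - now apply central_winv.
  - now rewrite <- Hzg, (Hz g), <- app_assoc, weq_app_winv, app_nil_r.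
Qed.

Lemma in_mod_center_gen gs g : In g gs -> in_mod_center (gensubl gs) g.
Proof. intros Hg; apply (in_mod_center_gensubl gs [] g g central_nil Hg); reflexivity. Qed.

Lemma gensub_in_mod_center {S T : word -> Prop} :
  (forall t, T t -> in_mod_center (gensub S) t) ->
  forall g, gensub T g -> in_mod_center (gensub S) g.
Proof.
  intros HT; apply gensub_ind; [| | | | exact HT].
  - intros u v Huv (k & z & Hk & Hz & Hv); exists k, z; repeat split; auto; now rewrite Huv.
  - exists [], []; repeat split; [exact gensub_nil | exact central_nil | reflexivity].
  - intros u v (k & z & Hk & Hz & Hu) (k' & z' & Hk' & Hz' & Hv).
    exists (k ++ k'), (z ++ z'); repeat split; [now apply gensub_app | |].
    + intros w; rewrite <- app_assoc, (Hz' w), app_assoc, (Hz w); now rewrite app_assoc.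
    + rewrite Hu, Hv; reassoc (k ++ (z ++ k') ++ z'); rewrite (Hz k').
      apply eq_weq; now rewrite <- !app_assoc.
  - intros u (k & z & Hk & Hz & Hu); exists (winv k), (winv z); repeat split.
    + now apply gensub_winv.
    + now apply central_winv.
    + rewrite Hu, winv_app; apply (central_winv z Hz).
Qed.

Lemma wcomm_mul_central k z h h' :
  central z -> central h' -> weq (wcomm (k ++ z) (h ++ h')) (wcomm k h).
Proof.
  intros Hz Hh'; unfold wcomm; rewrite !winv_app.
  reassoc (winv z ++ ((winv k ++ winv h' ++ winv h ++ k) ++ z) ++ h ++ h').
  rewrite <- (Hz (winv k ++ winv h' ++ winv h ++ k)).
  reassoc ((winv z ++ z) ++ winv k ++ winv h' ++ (winv h ++ k ++ h) ++ h');
    rewrite weq_winv_app, <- (Hh' (winv h ++ k ++ h)).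
  reassoc (winv k ++ (winv h' ++ h') ++ winv h ++ k ++ h); now rewrite weq_winv_app.
Qed.

Lemma derived_sub_of_mod_center {S : word -> Prop} gs :
  Forall (in_mod_center (gensub S)) gs -> forall w, derived (gensubl gs) w -> gensub S w.
Proof.
  intros Hgs.
  assert (HT : forall t, (exists g, In g gs /\ weq t g) -> in_mod_center (gensub S) t).
  { intros t (g & Hg & Htg).
    destruct (proj1 (Forall_forall _ _) Hgs g Hg) as (k & z & Hk & Hz & Hgk).
    exists k, z; repeat split; [exact Hk | exact Hz | now rewrite Htg]. }
  apply gensub_ind;
    [exact gensub_weq | exact gensub_nil | exact gensub_app | exact gensub_winv |].
  intros s (g & h & Hg & Hh & Hs).
  destruct (gensub_in_mod_center HT g Hg) as (k & z & Hk & Hz & Hgk).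
  destruct (gensub_in_mod_center HT h Hh) as (k' & z' & Hk' & Hz' & Hhk).
  apply (gensub_weq _ (wcomm k k')); [|now apply gensub_wcomm].
  now rewrite Hs, Hgk, Hhk, wcomm_mul_central.
Qed.

Lemma exponent_intersection w :
  gensubl [wmul wa wb; wc] w -> gensubl [wa; wmul wb wc] w -> gensubl [wa; wc] w ->
  forall g, exponent g w = 0.
Proof.
  intros Habc Habcb Hac.
  assert (Eba : exponent Gb w - exponent Ga w = 0).
  { apply (gensubl_hom_kernel _ [wmul wa wb; wc]
             (word_hom_sub _ _ (exponent_hom Gb) (exponent_hom Ga)));
      [repeat constructor | exact Habc]. }
  assert (Ebc : exponent Gb w - exponent Gc w = 0).
  { apply (gensubl_hom_kernel _ [wa; wmul wb wc]
             (word_hom_sub _ _ (exponent_hom Gb) (exponent_hom Gc)));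
      [repeat constructor | exact Habcb]. }
  assert (Eb : exponent Gb w = 0).
  { apply (gensubl_hom_kernel _ [wa; wc] (exponent_hom Gb)); [repeat constructor | exact Hac]. }
  intros []; lia.
Qed.

Theorem mainTheorem12 : forall w : word,
  (gensubl [wmul wa wb; wc] w /\ gensubl [wa; wmul wb wc] w /\ gensubl [wa; wc] w)
  <-> derived (gensubl [wa; wc]) w.
Proof.
  intros w; split.
  - intros (Habc & Habcb & Hac).
    destruct (gensubl_letter_word [wa; wc]
                ltac:(repeat constructor; apply gensubl_gen; simpl; auto) w Hac)
      as (u & Hu & Hwu).
    apply (gensub_weq _ u Hwu), zero_exponent_derived; [exact Hu|].
    intros g; rewrite <- (proj1 (exponent_hom g) _ _ Hwu).
    now apply exponent_intersection.
  - intros Hd; split; [|split]; apply (derived_sub_of_mod_center [wa; wc]); auto;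
      repeat constructor; try (apply in_mod_center_gen; simpl; tauto).
    + apply (in_mod_center_gensubl _ wb wa (wmul wa wb) central_b);
        [simpl; auto | apply central_b].
    + apply (in_mod_center_gensubl _ wb wc (wmul wb wc) central_b);
        [simpl; auto | reflexivity].
Qed.
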